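(* For every infinite cardinal $\theta$ the following are equivalent: (1) $\theta<\mathfrak{r}$. (2) For every singular cardinal $\kappa$ of countable cofinality and every set $A\subseteq[\kappa]^\omega$ consisting of cofinal subsets of $\kappa$ with $|A|\le\theta$, there is $E\subseteq\kappa$ such that for every $a\in A$, both $a\cap E$ and $a\setminus E$ are infinite. (3) There is a singular cardinal $\kappa$ of countable cofinality such that for every set $A\subseteq[\kappa]^\omega$ consisting of cofinal subsets of $\kappa$ with $|A|\le\theta$, there is $E\subseteq\kappa$ such that for every $a\in A$, both $a\cap E$ and $a\setminus E$ are infinite.
   Context: The reaping number $\mathfrak{r}$ is the least cardinality of a set $A\subseteq[\omega]^\omega$ such that for every $b\in[\omega]^\omega$ there is $a\in A$ with $a\setminus b$ or $a\cap b$ finite. *)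

From HB Require Import structures.
From mathcomp Require Import all_boot all_order all_algebra.
From mathcomp Require Import all_classical.
Set Implicit Arguments. Unset Strict Implicit. Unset Printing Implicit Defensive.

Local Open Scope classical_set_scope.
Local Open Scope card_scope.

Definition infsub_nat (a : set nat) : Prop := infinite_set a.

Definition reaping_family (A : set (set nat)) : Prop :=
  (forall a, A a -> infsub_nat a) /\
  forall b, infsub_nat b ->
    exists2 a, A a & (finite_set (a `\` b) \/ finite_set (a `&` b)).

(* theta < r, where r is the least cardinality of a reaping family and the
   infinite cardinal theta is given as the cardinality of the type Theta:
   no reaping family has cardinality <= theta. *)
Definition lt_reaping (Theta : Type) : Prop :=
  forall A : set (set nat), reaping_family A -> ~ (A #<= [set: Theta]).

Definition strict_well_order (K : Type) (lt : K -> K -> Prop) : Prop :=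
  (forall x, ~ lt x x) /\
  (forall x y z, lt x y -> lt y z -> lt x z) /\
  (forall x y, lt x y \/ x = y \/ lt y x) /\
  well_founded lt.

(* (K, lt) represents a cardinal kappa: a well-order (the von Neumann ordinal
   kappa up to isomorphism) all of whose proper initial segments have strictly
   smaller cardinality than K (initial ordinal). *)
Definition is_cardinal (K : Type) (lt : K -> K -> Prop) : Prop :=
  strict_well_order lt /\
  forall x : K, ~ ([set: K] #<= [set y | lt y x]).

Definition cofinal (K : Type) (lt : K -> K -> Prop) (a : set K) : Prop :=
  forall x : K, exists2 y, a y & lt x y.

Definition cof_omega (K : Type) (lt : K -> K -> Prop) : Prop :=
  exists f : nat -> K, (forall n, lt (f n) (f n.+1)) /\ cofinal lt (range f).

Definition singular_cof_omega (K : Type) (lt : K -> K -> Prop) : Prop :=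
  is_cardinal lt /\ cof_omega lt /\ ~ ([set: K] #<= [set: nat]).

Definition ctbl_inf (K : Type) (a : set K) : Prop :=
  countable a /\ infinite_set a.

Definition cofinal_split_prop (Theta K : Type) (lt : K -> K -> Prop) : Prop :=
  forall A : set (set K),
    (forall a, A a -> ctbl_inf a /\ cofinal lt a) ->
    A #<= [set: Theta] ->
    exists E : set K, forall a, A a ->
      infinite_set (a `&` E) /\ infinite_set (a `\` E).

From Stdlib Require Eqdep_dec PeanoNat.
From mathcomp Require Import all_boot all_order all_algebra all_classical.
From mathcomp Require Import zify wochoice.
Set Implicit Arguments. Unset Strict Implicit. Unset Printing Implicit Defensive.
Local Open Scope classical_set_scope.
Local Open Scope card_scope.

(** A strictly increasing cofinal sequence [f : nat -> K] translates between
    cofinal subsets of [K] and infinite subsets of [nat]: [r] goes to the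
    countable cofinal set [f @` r], and a cofinal [a] goes to the infinite set
    of the indices [index_above x], [x \in a], where [x < f (index_above x)].
    A set splitting the translated set pulls back to one splitting the original,
    so for every [K] of countable cofinality the splitting property for cofinal
    subsets of [K] is equivalent to the one for infinite subsets of [nat], that
    is, to [theta < r].  A singular cardinal of countable cofinality exists,
    e.g. beth_omega. *)

Lemma infinite_natP (A : set nat) :
  infinite_set A <-> forall N, exists2 n, A n & (N <= n)%N.
Proof.
split=> [Ainf N | Aunb /finite_fsetP[X defA]].
  apply: contrapT => Abounded; apply: Ainf.
  apply: sub_finite_set (finite_II N) => n An /=; rewrite ltnNge.
  by apply/negP => Nn; apply: Abounded; exists n.
have [n + Nn] := Aunb (\max_(i <- finmap.enum_fset X) i).+1; rewrite defA /= => Xn.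
by move: Nn; rewrite ltnNge => /negP; apply; exact: (@leq_bigmax_seq _ _ predT id n Xn).
Qed.

Lemma card_le_inj T U (A : set T) (B : set U) (f : T -> U) :
  set_fun A B f -> set_inj A f -> A #<= B.
Proof.
move=> fAB finj; have [g] : $|{injfun A >-> B}| by apply/injfunPex; exists f.
exact: inj_card_le.
Qed.

Lemma not_card_le_powerset X : ~ ([set: set X] #<= [set: X]).
Proof.
move=> /pcard_surjP[g gsurj]; have [x _ gx] := gsurj [set x | ~ g x x] I.
have diag : g x x <-> ~ g x x by rewrite {1}gx.
have ngxx : ~ g x x by move=> gxx; exact: (diag.1 gxx gxx).
exact: (ngxx (diag.2 ngxx)).
Qed.

Section StrictWellOrder.
Variables (T : eqType) (R : rel T).
Hypothesis R_wo : well_order R.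

Let R_wo_chain : wo_chain R predT. Proof. by move=> A _; exact: R_wo. Qed.

Let R_anti x y : R x y -> R y x -> x = y.
Proof. by move=> Rxy Ryx; apply: (wo_chain_antisymmetric R_wo_chain); rewrite ?Rxy. Qed.

Lemma well_order_trans : transitive R.
Proof.
move=> y x z Rxy Ryz.
have [|w [[w_xyz lbw] _]] := R_wo (A := [pred u | [|| u == x, u == y | u == z]]).
  by exists x; rewrite inE eqxx.
have {}lbw u : [|| u == x, u == y | u == z] -> R w u by move=> ?; exact: lbw.
move: w_xyz; rewrite inE => /or3P[] /eqP ew; subst w.
- by apply: lbw; rewrite eqxx !orbT.
- by rewrite (R_anti Rxy (lbw x _)) // eqxx.
- by rewrite -(R_anti Ryz (lbw y _)) // eqxx orbT.
Qed.

Lemma well_order_strict : strict_well_order (fun x y => R x y /\ x <> y).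
Proof.
split; [by move=> x [] | split; [|split]].
- move=> x y z [Rxy nxy] [Ryz nyz]; split; first exact: well_order_trans Ryz.
  by move=> exz; subst z; apply: nxy; exact: R_anti.
- move=> x y; have [->|nxy] := pselect (x = y); first by right; left.
  have /orP[Rxy|Ryx] := wo_chainW R_wo_chain (isT : x \in predT) (isT : y \in predT);
    [left | right; right]; split=> // e; apply: nxy; by rewrite e.
- move=> x; apply: contrapT => nAx.
  pose not_acc := [pred y | `[< ~ Acc (fun x y => R x y /\ x <> y) y >]].
  have [|z [[/asboolP nAz lbz] _]] := R_wo (A := not_acc); first by exists x; apply/asboolP.
  apply: nAz; constructor => y [Ryz nyz]; apply: contrapT => nAy.
  by apply: nyz; apply: R_anti Ryz (lbz y _); apply/asboolP.
Qed.

End StrictWellOrder.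

Section RankLex.
Variables (T : Type) (rank : T -> nat) (lt0 : T -> T -> Prop).

Definition rank_lex (x y : T) : Prop :=
  (rank x < rank y)%N \/ rank x = rank y /\ lt0 x y.

Lemma rank_lex_le x y : rank_lex x y -> (rank x <= rank y)%N.
Proof. by case=> [/ltnW|[->]]. Qed.

Lemma rank_lex_swo : strict_well_order lt0 -> strict_well_order rank_lex.
Proof.
move=> [lt0xx [lt0_trans [lt0_total lt0_wf]]].
split; [|split; [|split]].
- by move=> x [|[_ /lt0xx]] //; rewrite ltnn.
- move=> x y z [xy|[exy xy]] [yz|[eyz yz]]; [left; lia | left; lia | left; lia |].
  by right; split; [rewrite exy | exact: lt0_trans xy yz].
- move=> x y; case: (ltngtP (rank x) (rank y)) => [xy|yx|exy].
  + by left; left.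
  + by right; right; left.
  by case: (lt0_total x y) => [xy|[->|yx]]; [left; right | right; left | right; right; right].
- suff Acc_rank n x : rank x = n -> Acc rank_lex x by move=> x; exact: Acc_rank.
  elim/ltn_ind: n x => n IHn x; elim/(well_founded_induction lt0_wf): x => x IHx rx.
  constructor=> y [ryx|[ryx lt0yx]]; first by apply: (IHn (rank y)) => //; rewrite -rx.
  by apply: IHx; rewrite ?ryx.
Qed.

End RankLex.

Definition splits T (E a : set T) : Prop :=
  infinite_set (a `&` E) /\ infinite_set (a `\` E).

Definition nat_split_prop (Theta : Type) : Prop :=
  forall R : set (set nat), (forall r, R r -> infinite_set r) ->
    R #<= [set: Theta] -> exists E : set nat, forall r, R r -> splits E r.

Lemma splits_preimage T U (g : T -> U) (E : set U) (a : set T) :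
  splits E (g @` a) -> splits (g @^-1` E) a.
Proof.
move=> [IaE DaE]; split=> fin; [apply: IaE | apply: DaE];
  apply: sub_finite_set (finite_image g fin) => _ [[x ax <-] Ex]; by exists x.
Qed.

Lemma lt_reapingE Theta : lt_reaping Theta <-> nat_split_prop Theta.
Proof.
split=> [Hr R Rinf RT | Hs R [Rinf Rreap] RT].
  apply: contrapT => nosplit; apply: (Hr R) RT; split=> // b binf.
  apply: contrapT => noreap; apply: nosplit; exists b => r Rr.
  by split=> fin; apply: noreap; exists r => //; [right | left].
have [E HE] := Hs R Rinf RT.
have [r0 Rr0 _] := Rreap setT infinite_nat.
have Einf : infsub_nat E by apply: sub_infinite_set (HE r0 Rr0).1; apply: subIsetr.
have [r Rr [fin|fin]] := Rreap E Einf; have [IrE DrE] := HE r Rr;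
  by [apply: DrE | apply: IrE].
Qed.

Section CofinalSequence.
Variables (K : Type) (lt : K -> K -> Prop) (f : nat -> K).
Hypotheses (ltxx : forall x, ~ lt x x)
  (lt_trans : forall x y z, lt x y -> lt y z -> lt x z)
  (f_lt : forall n, lt (f n) (f n.+1)) (f_cofinal : cofinal lt (range f)).

Lemma f_lt_mono m n : (m < n)%N -> lt (f m) (f n).
Proof.
elim: n => [//|n IHn]; rewrite ltnS leq_eqVlt => /orP[/eqP->|/IHn fmn].
  exact: f_lt.
exact: lt_trans fmn (f_lt n).
Qed.

Lemma f_inj : injective f.
Proof.
by move=> m n fmn; apply/eqP; case: ltngtP => // /f_lt_mono; rewrite fmn => /ltxx.
Qed.

Lemma cofinal_image r : infinite_set r -> cofinal lt (f @` r).
Proof.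
move=> /infinite_natP r_unb x; have [_ [m _ <-] xfm] := f_cofinal x.
have [n rn mn] := r_unb m.+1; exists (f n); first by exists n.
exact: lt_trans xfm (f_lt_mono mn).
Qed.

Lemma ctbl_inf_image r : infinite_set r -> ctbl_inf (f @` r).
Proof.
move=> rinf; split; first exact: card_le_trans (card_image_le f r) (card_leT r).
by rewrite (eq_finite_set (inj_card_eq (in2W f_inj))).
Qed.

Lemma ex_lt_f x : exists n, lt x (f n).
Proof. by have [_ [n _ <-] xfn] := f_cofinal x; exists n. Qed.

Definition index_above (x : K) : nat := sval (cid (ex_lt_f x)).

Lemma lt_index_above x : lt x (f (index_above x)).
Proof. exact: svalP (cid (ex_lt_f x)). Qed.

Lemma infinite_index_above a : cofinal lt a -> infinite_set (index_above @` a).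
Proof.
move=> acof; apply/infinite_natP => N; have [x ax fNx] := acof (f N).
exists (index_above x); first by exists x.
rewrite leqNgt; apply/negP => /f_lt_mono fifN.
exact: ltxx (lt_trans fNx (lt_trans (lt_index_above x) fifN)).
Qed.

Lemma cofinal_split_propE Theta : cofinal_split_prop Theta lt <-> nat_split_prop Theta.
Proof.
split=> [Ksplit R Rinf RT | Nsplit A Acof AT].
  have [|E HE] := Ksplit [set f @` r | r in R] _ (card_le_trans (card_image_le _ _) RT).
    by move=> _ [r Rr <-]; split; [apply: ctbl_inf_image | apply: cofinal_image]; exact: Rinf.
  by exists (f @^-1` E) => r Rr; apply: splits_preimage; apply: HE; exists r.
have [|E HE] := Nsplit [set index_above @` a | a in A] _
                       (card_le_trans (card_image_le _ _) AT).
  by move=> _ [a Aa <-]; apply: infinite_index_above; exact: (Acof a Aa).2.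
by exists (index_above @^-1` E) => a Aa; apply: splits_preimage; apply: HE; exists a.
Qed.

End CofinalSequence.

(** The points below one of level [n] embed in
    [stage n], whose powerset embeds in [beth_omega]: by Cantor no proper
    initial segment is as large as [beth_omega]. *)
Fixpoint stage (n : nat) : Type :=
  match n with 0 => nat | m.+1 => (stage m + set (stage m))%type end.

Definition level (n : nat) : Type :=
  match n with 0 => nat | m.+1 => set (stage m) end.

Definition beth_omega : Type := {n : nat & level n}.

Definition rank (p : beth_omega) : nat := projT1 p.

Definition level_default (n : nat) : level n :=
  match n with 0 => 0%N | m.+1 => set0 end.

Definition level_val (n : nat) (p : beth_omega) : level n :=
  let: existT k y := p in
  match PeanoNat.Nat.eq_dec k n with
  | left e => eq_rect k level y n e
  | right _ => level_default n
  end.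

Lemma level_val_inj n p q :
  rank p = n -> rank q = n -> level_val n p = level_val n q -> p = q.
Proof.
case: p => k y; case: q => k' y' /= rp rq; subst k k'; rewrite /level_val.
case: (PeanoNat.Nat.eq_dec n n) => [e|//].
by rewrite (Eqdep_dec.UIP_dec PeanoNat.Nat.eq_dec e erefl) /= => ->.
Qed.

Fixpoint to_stage (n : nat) : beth_omega -> stage n :=
  match n return beth_omega -> stage n with
  | 0 => level_val 0
  | m.+1 => fun p =>
      if rank p == m.+1 then inr (level_val m.+1 p) else inl (to_stage m p)
  end.

Lemma to_stage_inj n p q :
  (rank p <= n)%N -> (rank q <= n)%N -> to_stage n p = to_stage n q -> p = q.
Proof.
elim: n => [|n IHn] pn qn.
  by move/(@level_val_inj 0); apply; lia.
rewrite /=; case: eqP => [rp|rp]; case: eqP => [rq|rq] //.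
- by move=> [] /(level_val_inj rp rq).
- by move=> [] /IHn; apply; lia.
Qed.

Definition beth_wo : rel (classicType beth_omega) :=
  sval (well_ordering_principle (classicType beth_omega)).

Lemma beth_woP : well_order beth_wo.
Proof. exact: svalP (well_ordering_principle (classicType beth_omega)). Qed.

Definition beth_lt : beth_omega -> beth_omega -> Prop :=
  rank_lex rank (fun p q => beth_wo p q /\ p <> q).

Lemma beth_lt_swo : strict_well_order beth_lt.
Proof. exact: rank_lex_swo (well_order_strict beth_woP). Qed.

Lemma powerset_stage_card_le n : [set: set (stage n)] #<= [set: beth_omega].
Proof.
apply: (@card_le_inj _ _ _ _ (existT level n.+1)) => // s t _ _.
exact: Eqdep_dec.inj_pair2_eq_dec _ PeanoNat.Nat.eq_dec level n.+1 s t.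
Qed.

Lemma initial_segment_card_le x : [set y | beth_lt y x] #<= [set: stage (rank x)].
Proof.
apply: (@card_le_inj _ _ _ _ (to_stage (rank x))) => // p q /set_mem px /set_mem qx.
by apply: to_stage_inj; apply: rank_lex_le; [exact: px | exact: qx].
Qed.

Lemma beth_omega_singular : singular_cof_omega beth_lt.
Proof.
split; [split; first exact: beth_lt_swo | split].
- move=> x Kx; apply: (@not_card_le_powerset (stage (rank x))).
  apply: card_le_trans (powerset_stage_card_le _) _.
  exact: card_le_trans Kx (initial_segment_card_le x).
- exists (fun n => existT level n (level_default n)); split=> [n|x]; first by left.
  by exists (existT level (rank x).+1 (level_default _)); [exists (rank x).+1 | left].
- move=> Kn; apply: (@not_card_le_powerset nat).
  exact: card_le_trans (powerset_stage_card_le 0) Kn.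
Qed.

Theorem mainTheorem16 (Theta : Type) (Htheta : infinite_set [set: Theta]) :
  (lt_reaping Theta <->
   (forall (K : Type) (lt : K -> K -> Prop),
       singular_cof_omega lt -> cofinal_split_prop Theta lt))
  /\
  (lt_reaping Theta <->
   (exists (K : Type) (lt : K -> K -> Prop),
       singular_cof_omega lt /\ cofinal_split_prop Theta lt)).
Proof.
have splitE K (lt : K -> K -> Prop) :
    singular_cof_omega lt -> cofinal_split_prop Theta lt <-> lt_reaping Theta.
  move=> [[[ltxx [lt_trans _]] _] [[f [f_lt f_cofinal]] _]].
  exact: iff_trans (cofinal_split_propE ltxx lt_trans f_lt f_cofinal Theta)
                   (iff_sym (lt_reapingE Theta)).
split; split.
- by move=> Hr K lt Ksing; apply/(splitE _ _ Ksing).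
- by move=> Hall; apply/(splitE _ _ beth_omega_singular)/Hall/beth_omega_singular.
- move=> Hr; exists beth_omega, beth_lt; split; first exact: beth_omega_singular.
  exact/(splitE _ _ beth_omega_singular).
- by move=> [K [lt [Ksing Ksplit]]]; apply/(splitE _ _ Ksing).
Qed.
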